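(* For every $n\ge1$, \[ F^{\mathrm{(per)}}_{2n}(2)=\frac{(2n)!}{2\,n!}\cdot\frac{3\,\Gamma(\frac n2+1)}{\Gamma(\frac{3n}{2}+1)},\qquad F^{\mathrm{(per)}}_{2n}(\tfrac12)=2^{-n-1}\,\frac{(2n)!}{2\,n!}\cdot\frac{3\,\Gamma(\frac n2+1)}{\Gamma(\frac{3n}{2}+1)} . \] In particular, for $n$ odd, $F^{\mathrm{(per)}}_{2n}(2)=\dfrac{2^{2n-1}\mathrm{AV}_n^2}{\mathrm{A}_n}$ and $F^{\mathrm{(per)}}_{2n}(\tfrac12)=\dfrac{2^{n-2}\mathrm{AV}_n^2}{\mathrm{A}_n}$.
   Context: $F^{\mathrm{(per)}}_{2n}(x) = \sum_{k=1}^n \binom{n+k-2}{k-1}\frac{(2n-1)!\,(2n-k-1)! }{(3 n-2)!\,(n-k)!}x^k$ (boundary loop generating function of the periodic Temperley–Lieb loop model at loop weight 1, size $2n$). $\mathrm{A}_n=\prod_{j=0}^{n-1}\frac{(3j+1)!}{(n+j)!}$, and $\mathrm{AV}_{2m+1}=\prod_{j=0}^{m-1}(3j+2)\frac{(6j+3)!\,(2j+1)!}{(4j+3)!\,(4j+2)!}$. *)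

From Stdlib Require Import Reals Lra Lia Arith ZArith.
Open Scope R_scope.

(* gamma_half k = Gamma(k/2) for k >= 1 (positive half-integers), defined by
   Gamma(1/2) = sqrt PI, Gamma(1) = 1, Gamma(x+1) = x Gamma(x).
   gamma_half 0 is a junk value (Gamma has a pole at 0); never used. *)
Fixpoint gamma_half (k : nat) : R :=
  match k with
  | O => 0
  | S O => sqrt PI
  | S (S k') =>
      match k' with
      | O => 1
      | S _ => INR k' / 2 * gamma_half k'
      end
  end.

Fixpoint prodR (f : nat -> R) (n : nat) : R :=
  match n with
  | O => 1
  | S n' => prodR f n' * f n'
  end.

(* coefficient of x^k in F^(per)_{2n}(x), for 1 <= k <= n *)
Definition Fper_coef (n k : nat) : R :=
  C (n + k - 2) (k - 1) *
  (INR (fact (2 * n - 1)) * INR (fact (2 * n - k - 1)))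
  / (INR (fact (3 * n - 2)) * INR (fact (n - k))).

Definition Fper (n : nat) (x : R) : R :=
  sum_f_R0 (fun j => Fper_coef n (S j) * x ^ (S j)) (n - 1).

Definition A_n (n : nat) : R :=
  prodR (fun j => INR (fact (3 * j + 1)) / INR (fact (n + j))) n.

(* AV_{2m+1} = prod_{j=0}^{m-1} (3j+2) (6j+3)!(2j+1)! / ((4j+3)!(4j+2)!).
   AV n is only meaningful for n odd; it uses m = n / 2 (floor). *)
Definition AV (n : nat) : R :=
  prodR (fun j => INR (3 * j + 2) * INR (fact (6 * j + 3)) * INR (fact (2 * j + 1))
                  / (INR (fact (4 * j + 3)) * INR (fact (4 * j + 2))))
        (Nat.div2 n).

From Stdlib Require Import Reals Lra Lia Arith ZArith.
Open Scope R_scope.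

(* At x = 2 the sum is attacked by creative telescoping: writing the summand with
   indices (j, b) = (k - 1, n - k), Zeilberger's algorithm yields a rational certificate
   proving 3(3n+2)(3n+4) F_{2n+4}(2) = 16(2n+1)(2n+3) F_{2n}(2) for n >= 2, and
   Gamma(x+1) = x Gamma(x) shows the claimed closed form obeys the same recurrence.
   The value at 1/2 follows from the palindromy c_k = c_{n+1-k} of the coefficients.
   For odd n, A_n and AV_n are products of factorials whose two-step ratios make
   2^{2n-1} AV_n^2 / A_n satisfy this recurrence as well. *)

Ltac fact_pos :=
  repeat match goal with
  | |- context [INR (fact ?k)] =>
      lazymatch goal with
      | _ : 0 < INR (fact k) |- _ => fail
      | _ => pose proof (lt_0_INR _ (lt_O_fact k))
      end
  end.

Ltac push_INR :=
  rewrite ?S_INR, ?plus_INR, ?mult_INR;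
  simpl (INR 0); simpl (INR 1); simpl (INR 2); simpl (INR 3).

Lemma INR_fact_succ k : INR (fact (S k)) = (INR k + 1) * INR (fact k).
Proof. rewrite fact_simpl, mult_INR, S_INR. reflexivity. Qed.

Definition Fcoef (j b : nat) : R :=
  INR (fact (2*j+b)) * INR (fact (2*j+2*b+1)) * INR (fact (j+2*b))
  / (INR (fact j) * INR (fact (j+b)) * INR (fact (3*j+3*b+1)) * INR (fact b)).

Lemma Fper_coef_Fcoef n j b : (j + b + 1 = n)%nat -> Fper_coef n (S j) = Fcoef j b.
Proof.
  intros <-. unfold Fper_coef, Fcoef, C.
  replace (j+b+1+S j-2)%nat with (2*j+b)%nat by lia.
  replace (S j - 1)%nat with j by lia.
  replace (2*j+b-j)%nat with (j+b)%nat by lia.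
  replace (2*(j+b+1)-1)%nat with (2*j+2*b+1)%nat by lia.
  replace (2*(j+b+1)-S j-1)%nat with (j+2*b)%nat by lia.
  replace (3*(j+b+1)-2)%nat with (3*j+3*b+1)%nat by lia.
  replace (j+b+1-S j)%nat with b by lia.
  fact_pos. field. lra.
Qed.

Lemma Fper_sum m x :
  Fper (S m) x = sum_f_R0 (fun j => Fcoef j (m - j) * x ^ S j) m.
Proof.
  unfold Fper. replace (S m - 1)%nat with m by lia.
  apply sum_eq. intros j Hj. rewrite (Fper_coef_Fcoef (S m) j (m - j)) by lia.
  reflexivity.
Qed.

Lemma Fcoef_pos j b : 0 < Fcoef j b.
Proof.
  unfold Fcoef. fact_pos.
  apply Rdiv_lt_0_compat; repeat apply Rmult_lt_0_compat; assumption.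
Qed.

Lemma Fcoef_sym j b : Fcoef j b = Fcoef b j.
Proof.
  unfold Fcoef.
  replace (2*b+j)%nat with (j+2*b)%nat by lia.
  replace (2*j+b)%nat with (b+2*j)%nat by lia.
  replace (2*b+2*j+1)%nat with (2*j+2*b+1)%nat by lia.
  replace (b+j)%nat with (j+b)%nat by lia.
  replace (3*b+3*j+1)%nat with (3*j+3*b+1)%nat by lia.
  fact_pos. field. lra.
Qed.

Lemma Fcoef_succ_r j b : Fcoef j (S b) = Fcoef j b *
  ((2 * INR j + INR b + 1) * (2 * INR j + 2 * INR b + 3) * (2 * INR j + 2 * INR b + 2)
   * (INR j + 2 * INR b + 2) * (INR j + 2 * INR b + 1)
  / ((INR j + INR b + 1) * (3 * INR j + 3 * INR b + 4) * (3 * INR j + 3 * INR b + 3)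
     * (3 * INR j + 3 * INR b + 2) * (INR b + 1))).
Proof.
  unfold Fcoef.
  replace (2*j+S b)%nat with (S (2*j+b)) by lia.
  replace (2*j+2*S b+1)%nat with (S (S (2*j+2*b+1))) by lia.
  replace (j+2*S b)%nat with (S (S (j+2*b))) by lia.
  replace (j+S b)%nat with (S (j+b)) by lia.
  replace (3*j+3*S b+1)%nat with (S (S (S (3*j+3*b+1)))) by lia.
  rewrite !INR_fact_succ. fact_pos.
  pose proof (pos_INR j). pose proof (pos_INR b). push_INR.
  field. repeat split; lra.
Qed.

Lemma Fcoef_succ_l j b : Fcoef (S j) b = Fcoef j b *
  ((2 * INR j + INR b + 2) * (2 * INR j + INR b + 1) * (2 * INR j + 2 * INR b + 3)
   * (2 * INR j + 2 * INR b + 2) * (INR j + 2 * INR b + 1)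
  / ((INR j + 1) * (INR j + INR b + 1) * (3 * INR j + 3 * INR b + 4)
     * (3 * INR j + 3 * INR b + 3) * (3 * INR j + 3 * INR b + 2))).
Proof.
  unfold Fcoef.
  replace (2*S j+b)%nat with (S (S (2*j+b))) by lia.
  replace (2*S j+2*b+1)%nat with (S (S (2*j+2*b+1))) by lia.
  replace (S j+2*b)%nat with (S (j+2*b)) by lia.
  replace (S j+b)%nat with (S (j+b)) by lia.
  replace (3*S j+3*b+1)%nat with (S (S (S (3*j+3*b+1)))) by lia.
  rewrite !INR_fact_succ. fact_pos.
  pose proof (pos_INR j). pose proof (pos_INR b). push_INR.
  field. repeat split; lra.
Qed.

Definition Fterm2 (j b : nat) : R := Fcoef j b * 2 ^ S j.

Definition rec_lhs_coef (n : R) : R := 3 * (3*n+2) * (3*n+4).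
Definition rec_rhs_coef (n : R) : R := 16 * (2*n+1) * (2*n+3).

(* The rational certificate produced by Zeilberger's algorithm for the summand
   [Fterm2 j (n - 1 - j)] of [F_{2n}(2)]. *)
Definition zeil_cert (n j : R) : R :=
  j * ((-576 - 4128*n - 12252*n^2 - 19038*n^3 - 16170*n^4 - 7074*n^5 - 1242*n^6)
       + (1200 + 6420*n + 13680*n^2 + 14583*n^3 + 7803*n^4 + 1674*n^5) * (j+1)
       + (-840 - 3402*n - 4995*n^2 - 3159*n^3 - 729*n^4) * (j+1)^2
       + (240 + 732*n + 702*n^2 + 216*n^3) * (j+1)^3
       + (-24 - 54*n - 27*n^2) * (j+1)^4)
  / ((n+j+1)*(n+j)*(2*n-j+2)*(2*n-j+1)*(2*n-j)).

Lemma zeil_step n j b : (j + b + 1 = n)%nat ->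
  rec_lhs_coef (INR n) * Fterm2 j (S (S b)) - rec_rhs_coef (INR n) * Fterm2 j b =
  Fterm2 (S j) (S b) * zeil_cert (INR n) (INR (S j))
  - Fterm2 j (S (S b)) * zeil_cert (INR n) (INR j).
Proof.
  intros <-. unfold Fterm2. rewrite Fcoef_succ_l, !Fcoef_succ_r.
  pose proof (Fcoef_pos j b). pose proof (pos_INR j). pose proof (pos_INR b).
  set (X := Fcoef j b) in *; clearbody X.
  simpl pow. push_INR.
  unfold zeil_cert, rec_lhs_coef, rec_rhs_coef. field. repeat split; lra.
Qed.

Lemma zeil_step_last n : (2 <= n)%nat ->
  rec_lhs_coef (INR n) * Fterm2 n 1 =
  Fterm2 (S n) 0 * zeil_cert (INR n) (INR (S n)) - Fterm2 n 1 * zeil_cert (INR n) (INR n).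
Proof.
  intro Hn. unfold Fterm2. rewrite Fcoef_succ_l, Fcoef_succ_r.
  assert (2 <= INR n) by (apply (le_INR 2) in Hn; simpl in Hn; lra).
  pose proof (Fcoef_pos n 0).
  set (X := Fcoef n 0) in *; clearbody X.
  simpl pow. push_INR.
  unfold zeil_cert, rec_lhs_coef. field. repeat split; lra.
Qed.

Lemma zeil_cert_top n : (2 <= n)%nat ->
  zeil_cert (INR n) (INR (S n)) = - rec_lhs_coef (INR n).
Proof.
  intro Hn. assert (2 <= INR n) by (apply (le_INR 2) in Hn; simpl in Hn; lra).
  push_INR. unfold zeil_cert, rec_lhs_coef. field. repeat split; lra.
Qed.

Lemma sum_f_R0_telescope (f g : nat -> R) (N : nat) :
  (forall i, (i <= N)%nat -> f i = g (S i) - g i) ->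
  sum_f_R0 f N = g (S N) - g O.
Proof.
  induction N as [|N IH]; intro H.
  - simpl. apply H. lia.
  - simpl. rewrite IH by (intros; apply H; lia). rewrite (H (S N)) by lia. ring.
Qed.

Lemma Fper2_rec n : (2 <= n)%nat ->
  rec_lhs_coef (INR n) * Fper (n + 2) 2 = rec_rhs_coef (INR n) * Fper n 2.
Proof.
  intro Hn. destruct n as [|m]; [lia|].
  set (a := rec_lhs_coef (INR (S m))). set (c := zeil_cert (INR (S m))).
  assert (Hbulk : a * sum_f_R0 (fun j => Fterm2 j (S (S m) - j)) m
                  - rec_rhs_coef (INR (S m)) * sum_f_R0 (fun j => Fterm2 j (m - j)) m
                  = Fterm2 (S m) 1 * c (INR (S m)) - Fterm2 0 (S (S m)) * c (INR 0)).
  { rewrite !scal_sum, <- minus_sum.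
    rewrite (sum_f_R0_telescope _ (fun j => Fterm2 j (S (S m) - j) * c (INR j))).
    { replace (S (S m) - S m)%nat with 1%nat by lia. reflexivity. }
    intros j Hj.
    replace (S (S m) - j)%nat with (S (S (m - j))) by lia.
    replace (S (S m) - S j)%nat with (S (m - j)) by lia.
    rewrite Rmult_comm, (Rmult_comm (Fterm2 j (m - j))).
    apply zeil_step. lia. }
  assert (Hlast := zeil_step_last (S m) Hn).
  assert (Htop := zeil_cert_top (S m) Hn).
  assert (Hc0 : c (INR 0) = 0) by (unfold c, zeil_cert; simpl; lra).
  replace (S m + 2)%nat with (S (S (S m))) by lia.
  rewrite !Fper_sum, !tech5.
  replace (S (S m) - S m)%nat with 1%nat by lia.
  replace (S (S m) - S (S m))%nat with 0%nat by lia.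
  fold a c in Hlast, Htop |- *. unfold Fterm2 in *.
  rewrite Hc0, Htop in *. lra.
Qed.

Definition Fper2_closed (n : nat) : R :=
  INR (fact (2 * n)) / (2 * INR (fact n))
  * (3 * gamma_half (n + 2) / gamma_half (3 * n + 2)).

Lemma gamma_half_SSS k : gamma_half (S (S (S k))) = INR (S k) / 2 * gamma_half (S k).
Proof. reflexivity. Qed.

Lemma gamma_half_pos k : 0 < gamma_half (S k).
Proof.
  induction k as [k IH] using lt_wf_ind.
  destruct k as [|[|k]].
  - apply sqrt_lt_R0, PI_RGT_0.
  - simpl. lra.
  - rewrite gamma_half_SSS. pose proof (IH k ltac:(lia)).
    pose proof (lt_0_INR (S k) ltac:(lia)). apply Rmult_lt_0_compat; lra.
Qed.

Lemma Fper2_closed_rec n :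
  rec_lhs_coef (INR n) * Fper2_closed (n + 2) = rec_rhs_coef (INR n) * Fper2_closed n.
Proof.
  unfold Fper2_closed.
  replace (2*(n+2))%nat with (S (S (S (S (2*n))))) by lia.
  replace (n+2+2)%nat with (S (S (S (S n)))) by lia.
  replace (n+2)%nat with (S (S n)) by lia.
  replace (3*S (S n)+2)%nat with (S (S (S (S (S (S (S (3*n+1)))))))) by lia.
  replace (3*n+2)%nat with (S (3*n+1)) by lia.
  rewrite (gamma_half_SSS (S n)), (gamma_half_SSS (S (S (S (S (3*n+1)))))),
    (gamma_half_SSS (S (S (3*n+1)))), (gamma_half_SSS (3*n+1)).
  rewrite !INR_fact_succ.
  pose proof (gamma_half_pos (S n)). pose proof (gamma_half_pos (3*n+1)).
  set (g1 := gamma_half (S (S n))) in *. set (g2 := gamma_half (S (3*n+1))) in *.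
  clearbody g1 g2.
  pose proof (pos_INR n). fact_pos. push_INR.
  unfold rec_lhs_coef, rec_rhs_coef. field. repeat split; lra.
Qed.

Ltac INR_to_IZR :=
  repeat match goal with
  | |- context [INR ?t] =>
      let v := eval vm_compute in (Z.of_nat t) in
      replace (INR t) with (IZR v) by (rewrite INR_IZR_INZ; reflexivity)
  end.

Ltac Fper2_base :=
  unfold Fper2_closed; cbv beta iota zeta delta [Fper Fper_coef C sum_f_R0 Nat.sub];
  simpl gamma_half; INR_to_IZR;
  pose proof (sqrt_lt_R0 PI PI_RGT_0); field; lra.

Lemma Fper2_closed_eq n : (1 <= n)%nat -> Fper n 2 = Fper2_closed n.
Proof.
  induction n as [n IH] using lt_wf_ind. intro Hn.
  (* The certificate has a pole at n = 1, so the recurrence only starts from n = 2. *)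
  destruct n as [|[|[|[|m]]]]; [lia|Fper2_base|Fper2_base|Fper2_base|].
  replace (S (S (S (S m)))) with (S (S m) + 2)%nat by lia.
  assert (0 < rec_lhs_coef (INR (S (S m)))).
  { unfold rec_lhs_coef. pose proof (pos_INR (S (S m))). nra. }
  apply (Rmult_eq_reg_l (rec_lhs_coef (INR (S (S m))))); [|lra].
  rewrite Fper2_rec, Fper2_closed_rec, IH by lia. reflexivity.
Qed.

Lemma sum_f_R0_rev (f : nat -> R) m :
  sum_f_R0 f m = sum_f_R0 (fun j => f (m - j)%nat) m.
Proof.
  revert f. induction m as [|m IH]; intro f; [reflexivity|].
  rewrite (decomp_sum (fun j => f (S m - j)%nat) (S m)) by lia.
  simpl pred. rewrite tech5, (IH f), Nat.sub_0_r. apply Rplus_comm.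
Qed.

Lemma Fper_half n : (1 <= n)%nat -> Fper n (1 / 2) = / 2 ^ (n + 1) * Fper n 2.
Proof.
  intro Hn. destruct n as [|m]; [lia|].
  rewrite !Fper_sum, sum_f_R0_rev, scal_sum.
  apply sum_eq. intros j Hj.
  replace (m - (m - j))%nat with j by lia.
  rewrite Fcoef_sym.
  replace (S m + 1)%nat with (S (m - j) + S j)%nat by lia.
  rewrite pow_add. unfold Rdiv. rewrite Rmult_1_l, pow_inv, Rinv_mult.
  pose proof (pow_lt 2 (S j) ltac:(lra)). pose proof (pow_lt 2 (S (m - j)) ltac:(lra)).
  field. split; lra.
Qed.

Lemma prodR_pos (f : nat -> R) n : (forall j, 0 < f j) -> 0 < prodR f n.
Proof. intro H. induction n; simpl; [lra|]. apply Rmult_lt_0_compat; auto. Qed.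

Lemma prodR_div (u v : nat -> R) n : (forall j, 0 < v j) ->
  prodR (fun j => u j / v j) n = prodR u n / prodR v n.
Proof.
  intro H. induction n; simpl; [field|].
  rewrite IHn. pose proof (prodR_pos v n H). pose proof (H n).
  field. split; lra.
Qed.

Definition fact_block (k n : nat) : R := prodR (fun j => INR (fact (k + j))) n.

Lemma fact_block_pos k n : 0 < fact_block k n.
Proof. apply prodR_pos. intro j. fact_pos. assumption. Qed.

Lemma fact_block_shift k n :
  fact_block (S k) n * INR (fact k) = INR (fact (k + n)) * fact_block k n.
Proof.
  unfold fact_block. induction n as [|n IH]; cbn [prodR].
  - rewrite Nat.add_0_r. ring.
  - replace (k + S n)%nat with (S k + n)%nat by lia.
    transitivity (prodR (fun j => INR (fact (S k + j))) n * INR (fact k)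
                  * INR (fact (S k + n))); [ring|].
    rewrite IH. ring.
Qed.

Lemma A_n_fact_block n :
  A_n n = prodR (fun j => INR (fact (3 * j + 1))) n / fact_block n n.
Proof. apply prodR_div. intro j. fact_pos. assumption. Qed.

Lemma A_n_pos n : 0 < A_n n.
Proof.
  rewrite A_n_fact_block. apply Rdiv_lt_0_compat; [|apply fact_block_pos].
  apply prodR_pos. intro j. fact_pos. assumption.
Qed.

Lemma A_n_add2 n : A_n (n + 2) = A_n n
  * (INR (fact (3*n+1)) * INR (fact (3*n+4)) * INR (fact n) * INR (fact (n+1)))
  / (INR (fact (2*n)) * INR (fact (2*n+1)) * INR (fact (2*n+2)) * INR (fact (2*n+3))).
Proof.
  rewrite !A_n_fact_block.
  replace (n+2)%nat with (S (S n)) by lia. cbn [prodR].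
  assert (E3 : fact_block (S (S n)) (S (S n))
              = fact_block (S (S n)) n * INR (fact (2*n+2)) * INR (fact (2*n+3))).
  { unfold fact_block. cbn [prodR].
    replace (S (S n) + n)%nat with (2*n+2)%nat by lia.
    replace (S (S n) + S n)%nat with (2*n+3)%nat by lia. reflexivity. }
  rewrite E3.
  pose proof (fact_block_shift (S n) n) as E1. pose proof (fact_block_shift n n) as E2.
  replace (S n + n)%nat with (2*n+1)%nat in E1 by lia.
  replace (n + n)%nat with (2*n)%nat in E2 by lia.
  replace (3 * S n + 1)%nat with (3*n+4)%nat by lia.
  replace (n+1)%nat with (S n) by lia.
  pose proof (fact_block_pos n n). pose proof (fact_block_pos (S n) n).
  pose proof (fact_block_pos (S (S n)) n).
  assert (0 < prodR (fun j => INR (fact (3*j+1))) n)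
    by (apply prodR_pos; intro j; fact_pos; assumption).
  set (X := prodR (fun j => INR (fact (3*j+1))) n) in *.
  set (Y2 := fact_block (S (S n)) n) in *. set (Y1 := fact_block (S n) n) in *.
  set (Y := fact_block n n) in *. fact_pos. clearbody X Y Y1 Y2.
  replace Y2 with (INR (fact (2*n+1)) * Y1 / INR (fact (S n))) by (field_simplify_eq; lra).
  replace Y1 with (INR (fact (2*n)) * Y / INR (fact n)) by (field_simplify_eq; lra).
  field. repeat split; lra.
Qed.

Lemma AV_add2 p : AV (2*p+1 + 2) = AV (2*p+1)
  * (INR (3*p+2) * INR (fact (6*p+3)) * INR (fact (2*p+1))
     / (INR (fact (4*p+3)) * INR (fact (4*p+2)))).
Proof.
  unfold AV. replace (2*p+1+2)%nat with (S (2*(S p))) by lia.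
  replace (2*p+1)%nat with (S (2*p)) at 1 by lia.
  rewrite !Nat.div2_succ_double. reflexivity.
Qed.

Definition odd_closed (n : nat) : R := 2 ^ (2 * n - 1) * AV n ^ 2 / A_n n.

Lemma odd_closed_rec p :
  rec_lhs_coef (INR (2*p+1)) * odd_closed (2*p+1 + 2)
  = rec_rhs_coef (INR (2*p+1)) * odd_closed (2*p+1).
Proof.
  unfold odd_closed. rewrite A_n_add2, AV_add2.
  replace (2*(2*p+1+2)-1)%nat with ((2*(2*p+1)-1)+4)%nat by lia.
  rewrite pow_add.
  pose proof (A_n_pos (2*p+1)).
  replace (3*(2*p+1)+1)%nat with (S (6*p+3)) by lia.
  replace (3*(2*p+1)+4)%nat with (S (S (S (S (6*p+3))))) by lia.
  replace (2*p+1+1)%nat with (S (2*p+1)) by lia.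
  replace (2*(2*p+1))%nat with (4*p+2)%nat by lia.
  replace (4*p+2+1)%nat with (S (4*p+2)) by lia.
  replace (4*p+2+2)%nat with (S (S (4*p+2))) by lia.
  replace (4*p+2+3)%nat with (S (S (S (4*p+2)))) by lia.
  replace (4*p+3)%nat with (S (4*p+2)) by lia.
  rewrite !INR_fact_succ. fact_pos. pose proof (pos_INR p).
  set (X := A_n (2*p+1)) in *. set (Y := AV (2*p+1)) in *.
  set (W := 2 ^ (2*(2*p+1)-1)). clearbody X Y W.
  unfold rec_lhs_coef, rec_rhs_coef. push_INR. simpl (INR 4). simpl (INR 6).
  field. repeat split; lra.
Qed.

Lemma Fper2_closed_odd p : Fper2_closed (2*p+1) = odd_closed (2*p+1).
Proof.
  induction p as [|p IH].
  - unfold Fper2_closed, odd_closed, AV, A_n. simpl. simpl gamma_half.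
    INR_to_IZR. pose proof (sqrt_lt_R0 PI PI_RGT_0). field. lra.
  - replace (2 * S p + 1)%nat with (2*p+1 + 2)%nat by lia.
    assert (0 < rec_lhs_coef (INR (2*p+1))).
    { unfold rec_lhs_coef. pose proof (pos_INR (2*p+1)). nra. }
    apply (Rmult_eq_reg_l (rec_lhs_coef (INR (2*p+1)))); [|lra].
    rewrite Fper2_closed_rec, IH. symmetry. apply odd_closed_rec.
Qed.

Lemma powerRZ_2_mul_pow n : (1 <= n)%nat ->
  powerRZ 2 (Z.of_nat n - 2) * 2 ^ (n + 1) = 2 ^ (2 * n - 1).
Proof.
  intro Hn. rewrite !pow_powerRZ, <- powerRZ_add by lra. f_equal. lia.
Qed.

Theorem mainTheorem5 (n : nat) (hn : (1 <= n)%nat) :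
  Fper n 2 = INR (fact (2 * n)) / (2 * INR (fact n))
             * (3 * gamma_half (n + 2) / gamma_half (3 * n + 2))
  /\ Fper n (1 / 2) = / 2 ^ (n + 1) * (INR (fact (2 * n)) / (2 * INR (fact n))
             * (3 * gamma_half (n + 2) / gamma_half (3 * n + 2)))
  /\ (Nat.odd n = true ->
        Fper n 2 = 2 ^ (2 * n - 1) * AV n ^ 2 / A_n n
        /\ Fper n (1 / 2) = powerRZ 2 (Z.of_nat n - 2) * AV n ^ 2 / A_n n).
Proof.
  fold (Fper2_closed n).
  rewrite (Fper_half n hn), (Fper2_closed_eq n hn).
  split; [reflexivity|]. split; [reflexivity|].
  intros Hodd. apply Nat.odd_spec in Hodd as [p ->].
  rewrite Fper2_closed_odd. unfold odd_closed. split; [reflexivity|].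
  rewrite <- (powerRZ_2_mul_pow (2*p+1)) by lia.
  pose proof (pow_lt 2 (2*p+1+1) ltac:(lra)). pose proof (A_n_pos (2*p+1)).
  field. split; lra.
Qed.
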